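(* For every $\ell>0$ let $\mathscr D_\ell=\{(r,v)\in(0,\infty)\times\mathbb R: v^2-\frac mr+\frac{\ell}{r^2}>0\}$. Define $(R(\cdot,\cdot,\ell),V(\cdot,\cdot,\ell)):\mathbb R\times(0,\infty)\to\mathscr D_\ell$ by $$R(\theta,a,\ell)=p\,H_\kappa\Big(\frac{|\theta|}{p}\Big)-p\kappa,\qquad V(\theta,a,\ell)=\operatorname{sgn}(\theta)\,a\sqrt{1+\frac{m}{a^2R(\theta,a,\ell)}-\frac{\ell}{a^2R(\theta,a,\ell)^2}},$$ with $p=p(a,\ell)$, $\kappa=\kappa(a,\ell)$. Then this map is a canonical (symplectic) diffeomorphism, with inverse $(\Theta,\mathcal A):\mathscr D_\ell\to\mathbb R\times(0,\infty)$, $$\mathcal A(r,v,\ell)=\sqrt{v^2-\frac mr+\frac{\ell}{r^2}},\qquad\Theta(r,v,\ell)=\operatorname{sgn}(v)\,p(a,\ell)\,G_{\kappa(a,\ell)}\Big(\frac{r}{p(a,\ell)}+\kappa(a,\ell)\Big)\Big|_{a=\mathcal A(r,v,\ell)}.$$ Moreover, the solutions of $\dot r=v$, $\dot v=\frac{\ell}{r^3}-\frac m2\frac1{r^2}$ with $v^2-\frac mr+\frac{\ell}{r^2}>0$ are exactly the curves $t\mapsto(R(\theta+ta,a,\ell),V(\theta+ta,a,\ell))$ with parameters $(\theta,a)\in\mathbb R\times(0,\infty)$.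
   Context: Fix $m>0$. For $a,\ell>0$: $\kappa(a,\ell)=(1+4a^2\ell/m^2)^{-1/2}\in(0,1)$, $p(a,\ell)=\frac{m}{2a^2\kappa(a,\ell)}$. For $\kappa\in(0,1)$, $G_\kappa:[1,\infty)\to[0,\infty)$, $G_\kappa(x)=\sqrt{x^2-1}-\kappa\ln(x+\sqrt{x^2-1})$, and $H_\kappa=G_\kappa^{-1}:[0,\infty)\to[1,\infty)$. Canonical means that the map preserves the symplectic form, $dr\wedge dv=d\theta\wedge da$ (equivalently, Poisson brackets $\partial_rf\partial_vg-\partial_vf\partial_rg$ correspond to $\partial_\theta f\partial_ag-\partial_af\partial_\theta g$). *)

From Stdlib Require Import Reals ClassicalEpsilon.
From Coquelicot Require Import Coquelicot.
Open Scope R_scope.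

Definition sgn (x : R) : R :=
  match Rcase_abs x with
  | left _ => -1
  | right _ => if Req_EM_T x 0 then 0 else 1
  end.

Definition kappa (m a l : R) : R := / sqrt (1 + 4 * a ^ 2 * l / m ^ 2).

Definition pp (m a l : R) : R := m / (2 * a ^ 2 * kappa m a l).

Definition G (k x : R) : R := sqrt (x ^ 2 - 1) - k * ln (x + sqrt (x ^ 2 - 1)).

(* H_k = G_k^{-1} : [0,oo) -> [1,oo): the x >= 1 with G_k x = y
   (chosen by Hilbert's epsilon; it exists and is unique for 0<k<1, y>=0). *)
Definition H (k y : R) : R :=
  epsilon (inhabits 1) (fun x => 1 <= x /\ G k x = y).

Definition Dl (m l r v : R) : Prop := 0 < r /\ v ^ 2 - m / r + l / r ^ 2 > 0.

Definition Rf (m l th a : R) : R :=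
  pp m a l * H (kappa m a l) (Rabs th / pp m a l) - pp m a l * kappa m a l.

Definition Vf (m l th a : R) : R :=
  sgn th * a *
  sqrt (1 + m / (a ^ 2 * Rf m l th a) - l / (a ^ 2 * (Rf m l th a) ^ 2)).

Definition Af (m l r v : R) : R := sqrt (v ^ 2 - m / r + l / r ^ 2).

Definition Thf (m l r v : R) : R :=
  let a := Af m l r v in
  sgn v * pp m a l * G (kappa m a l) (r / pp m a l + kappa m a l).

Fixpoint Ck (n : nat) (U : R -> R -> Prop) (f : R -> R -> R) : Prop :=
  match n with
  | O => forall x y, U x y -> continuous (fun z : R * R => f (fst z) (snd z)) (x, y)
  | S k =>
      (forall x y, U x y -> ex_derive (fun t => f t y) x /\ ex_derive (fun s => f x s) y)
      /\ Ck k U (fun x y => Derive (fun t => f t y) x)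
      /\ Ck k U (fun x y => Derive (fun s => f x s) y)
  end.

Definition smooth (U : R -> R -> Prop) (f : R -> R -> R) : Prop := forall n, Ck n U f.

Definition Hplane (th a : R) : Prop := 0 < a.

(* Write s for the hyperbolic eccentric anomaly, the solution of the Kepler equation
   sinh s - kappa s = theta / p; it is unique because the left-hand side has derivative
   cosh s - kappa >= 1 - kappa > 0.  In terms of s the map reads R = p (cosh s - kappa) and
   V = a sinh s / (cosh s - kappa); since m = 2 a^2 kappa p and l = a^2 p^2 (1 - kappa^2), the energy
   V^2 - m/R + l/R^2 is then a^2, the inverse H of G gives H_kappa (|sinh s - kappa s|) = cosh s,
   and the inverse map is read off from sinh s = V R / (a p).  Smoothness of s follows by
   induction on the order from the implicit derivative (dy + s dkappa) / (cosh s - kappa); in the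
   Jacobian of (theta, a) |-> (R, V) the terms containing the a-derivative of s cancel.  Along a
   solution of the equations of motion the energy, hence a, is conserved and Theta grows at rate a,
   so the solution is the curve through the angle-action coordinates of any of its points. *)

From Stdlib Require Import Reals Lra Psatz ClassicalEpsilon FunctionalExtensionality.
From Coquelicot Require Import Coquelicot.
Open Scope R_scope.

(** * Smooth functions on open subsets of the plane *)

(* A class, so that the calculus lemmas below find the openness of their domain by instance
   resolution. *)

Class open_2d (U : R -> R -> Prop) : Prop :=
  locally_2d_of_open : forall x y, U x y -> locally_2d U x y.

Definition continuous_on_2d (U : R -> R -> Prop) (f : R -> R -> R) : Prop :=
  forall x y, U x y -> continuous (fun z : R * R => f (fst z) (snd z)) (x, y).

Definition partial_x (f : R -> R -> R) (x y : R) : R := Derive (fun t => f t y) x.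
Definition partial_y (f : R -> R -> R) (x y : R) : R := Derive (fun t => f x t) y.

(* Unlike [Ck], every level also asks for continuity of the function itself,
   which is what makes the class closed under products. *)
Fixpoint Cn (n : nat) (U : R -> R -> Prop) (f : R -> R -> R) : Prop :=
  continuous_on_2d U f /\
  match n with
  | O => True
  | S k =>
      (forall x y, U x y -> ex_derive (fun t => f t y) x /\ ex_derive (fun t => f x t) y) /\
      Cn k U (partial_x f) /\ Cn k U (partial_y f)
  end.

Definition Cinf (U : R -> R -> Prop) (f : R -> R -> R) : Prop := forall n, Cn n U f.

Lemma Cn_Ck n U f : Cn n U f -> Ck n U f.
Proof.
revert U f; induction n as [|n IH]; intros U f [Hc Hn]; simpl.
- exact Hc.
- destruct Hn as [Hd [Hx Hy]]. split; [exact Hd | split; apply IH; assumption].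
Qed.

Lemma Cinf_smooth U f : Cinf U f -> smooth U f.
Proof. intros H n. apply Cn_Ck, H. Qed.

Lemma Cn_S_Cn n U f : Cn (S n) U f -> Cn n U f.
Proof.
revert U f; induction n as [|n IH]; intros U f [Hc [Hd [Hx Hy]]].
- split; [exact Hc | exact I].
- split; [exact Hc|]. split; [exact Hd|]. split; apply IH; assumption.
Qed.

Lemma Cn_continuous n U f : Cn n U f -> continuous_on_2d U f.
Proof. destruct n; intros [H _]; exact H. Qed.

Definition open_1d (W : R -> Prop) : Prop := forall x, W x -> locally x W.

Fixpoint Cn1 (n : nat) (W : R -> Prop) (phi : R -> R) : Prop :=
  match n with
  | O => forall x, W x -> continuous phi x
  | S k => (forall x, W x -> ex_derive phi x) /\ Cn1 k W (Derive phi)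
  end.

Lemma Cn1_continuous n W phi : Cn1 n W phi -> forall x, W x -> continuous phi x.
Proof.
destruct n as [|n]; simpl; intros H x Hx; [exact (H x Hx)|].
apply (ex_derive_continuous phi), H, Hx.
Qed.

Lemma Cn1_ext n W (phi psi : R -> R) :
  open_1d W -> (forall x, W x -> phi x = psi x) -> Cn1 n W phi -> Cn1 n W psi.
Proof.
revert phi psi; induction n as [|n IH]; simpl; intros phi psi HW E H.
- intros x Hx. apply (continuous_ext_loc _ phi); [|exact (H x Hx)].
  generalize (HW x Hx). apply filter_imp. exact E.
- destruct H as [Hd Hn]. split.
  + intros x Hx. apply (ex_derive_ext_loc phi); [|exact (Hd x Hx)].
    generalize (HW x Hx). apply filter_imp. exact E.
  + apply (IH (Derive phi)); [exact HW | | exact Hn]. intros x Hx. apply Derive_ext_loc.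
    generalize (HW x Hx). apply filter_imp. exact E.
Qed.

Lemma open_1d_pos : open_1d (fun x => 0 < x).
Proof.
intros x Hx. exists (mkposreal x Hx). intros y Hy.
change (Rabs (y - x) < x) in Hy. apply Rabs_def2 in Hy. lra.
Qed.

Lemma Cn1_exp n W : Cn1 n W exp.
Proof.
assert (Dexp : Derive exp = exp).
{ apply functional_extensionality. intro x. apply is_derive_unique, is_derive_Reals, derivable_pt_lim_exp. }
induction n as [|n IH]; simpl.
- intros x _. apply (ex_derive_continuous exp). exists (exp x). apply is_derive_Reals, derivable_pt_lim_exp.
- split; [|rewrite Dexp; exact IH].
  intros x _. exists (exp x). apply is_derive_Reals, derivable_pt_lim_exp.
Qed.

Lemma Cn1_Rpower n c al : Cn1 n (fun x => 0 < x) (fun x => c * Rpower x al).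
Proof.
assert (D : forall c al x, 0 < x ->
          is_derive (fun x => c * Rpower x al) x ((c * al) * Rpower x (al - 1))).
{ intros c' al' x Hx. apply is_derive_Reals. rewrite Rmult_assoc.
  apply derivable_pt_lim_scal, derivable_pt_lim_power, Hx. }
revert c al; induction n as [|n IH]; intros c al; simpl.
- intros x Hx. apply (ex_derive_continuous (fun x => c * Rpower x al)). eexists. exact (D c al x Hx).
- split; [intros x Hx; eexists; exact (D c al x Hx)|].
  apply (Cn1_ext n _ (fun x => (c * al) * Rpower x (al - 1))); [exact open_1d_pos | | apply IH].
  intros x Hx. symmetry. apply is_derive_unique, D, Hx.
Qed.

Lemma Cn1_inv n : Cn1 n (fun x => 0 < x) Rinv.
Proof.
apply (Cn1_ext n _ (fun x => 1 * Rpower x (- (1)))); [exact open_1d_pos | | apply Cn1_Rpower].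
intros x Hx. rewrite Rpower_Ropp, Rpower_1 by exact Hx. ring.
Qed.

Lemma Cn1_sqrt n : Cn1 n (fun x => 0 < x) sqrt.
Proof.
apply (Cn1_ext n _ (fun x => 1 * Rpower x (/ 2))); [exact open_1d_pos | | apply Cn1_Rpower].
intros x Hx. rewrite Rpower_sqrt by exact Hx. ring.
Qed.

Lemma Cn1_ln n : Cn1 n (fun x => 0 < x) ln.
Proof.
destruct n as [|n]; simpl.
- intros x Hx. apply (ex_derive_continuous ln). exists (/ x). apply is_derive_ln, Hx.
- split; [intros x Hx; exists (/ x); apply is_derive_ln, Hx|].
  apply (Cn1_ext n _ Rinv); [exact open_1d_pos | | apply Cn1_inv].
  intros x Hx. symmetry. apply is_derive_unique, is_derive_ln, Hx.
Qed.

Section Calculus.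

Context {U : R -> R -> Prop} {HU : open_2d U}.

Lemma locally_2d_eq (f g : R -> R -> R) x y : (forall x y, U x y -> f x y = g x y) -> U x y ->
  locally_2d (fun u v => f u v = g u v) x y.
Proof.
intros E Hxy. destruct (locally_2d_of_open x y Hxy) as [d Hd].
exists d. intros u v Hu Hv. apply E, Hd; assumption.
Qed.

Lemma continuous_on_2d_ext (f g : R -> R -> R) :
  (forall x y, U x y -> f x y = g x y) -> continuous_on_2d U f -> continuous_on_2d U g.
Proof.
intros E Hf x y Hxy.
apply (continuous_ext_loc _ (fun z : R * R => f (fst z) (snd z))); [|exact (Hf x y Hxy)].
apply (proj1 (locally_2d_locally (fun u v => f u v = g u v) x y)), locally_2d_eq; assumption.
Qed.

Lemma Cn_ext n (f g : R -> R -> R) : (forall x y, U x y -> f x y = g x y) -> Cn n U f -> Cn n U g.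
Proof.
revert f g; induction n as [|n IH]; intros f g E [Hc Hn].
all: pose proof (continuous_on_2d_ext f g E Hc) as Hcg.
- split; [exact Hcg | exact I].
- destruct Hn as [Hd [Hx Hy]]. split; [exact Hcg|]. split; [|split].
  + intros x y Hxy. destruct (Hd x y Hxy) as [Dx Dy]. split.
    * eapply ex_derive_ext_loc; [|exact Dx].
      apply (locally_2d_1d_const_y (fun u v => f u v = g u v)), locally_2d_eq; assumption.
    * eapply ex_derive_ext_loc; [|exact Dy].
      apply (locally_2d_1d_const_x (fun u v => f u v = g u v)), locally_2d_eq; assumption.
  + apply (IH (partial_x f)); [|exact Hx]. intros x y Hxy. apply Derive_ext_loc.
    apply (locally_2d_1d_const_y (fun u v => f u v = g u v)), locally_2d_eq; assumption.
  + apply (IH (partial_y f)); [|exact Hy]. intros x y Hxy. apply Derive_ext_loc.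
    apply (locally_2d_1d_const_x (fun u v => f u v = g u v)), locally_2d_eq; assumption.
Qed.

Lemma Cn_const n c : Cn n U (fun _ _ => c).
Proof.
revert c; induction n as [|n IH]; intro c; (split; [intros x y _; apply continuous_const|]).
- exact I.
- split; [|split].
  + intros x y _. split; apply ex_derive_const.
  + apply (Cn_ext n (fun _ _ => 0)); [|apply IH]. intros x y _.
    unfold partial_x, partial_y. symmetry. apply Derive_const.
  + apply (Cn_ext n (fun _ _ => 0)); [|apply IH]. intros x y _.
    unfold partial_x, partial_y. symmetry. apply Derive_const.
Qed.

Lemma Cn_fst n : Cn n U (fun x _ => x).
Proof.
destruct n as [|n]; (split; [intros x y _; apply continuous_fst|]); [exact I|]. split; [|split].
- intros x y _. split; [apply ex_derive_id | apply ex_derive_const].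
- apply (Cn_ext n (fun _ _ => 1)); [|apply Cn_const]. intros x y _.
  unfold partial_x, partial_y. symmetry. apply Derive_id.
- apply (Cn_ext n (fun _ _ => 0)); [|apply Cn_const]. intros x y _.
  unfold partial_x, partial_y. symmetry. apply Derive_const.
Qed.

Lemma Cn_snd n : Cn n U (fun _ y => y).
Proof.
destruct n as [|n]; (split; [intros x y _; apply continuous_snd|]); [exact I|]. split; [|split].
- intros x y _. split; [apply ex_derive_const | apply ex_derive_id].
- apply (Cn_ext n (fun _ _ => 0)); [|apply Cn_const]. intros x y _.
  unfold partial_x, partial_y. symmetry. apply Derive_const.
- apply (Cn_ext n (fun _ _ => 1)); [|apply Cn_const]. intros x y _.
  unfold partial_x, partial_y. symmetry. apply Derive_id.
Qed.

Lemma Cn_plus n (f g : R -> R -> R) : Cn n U f -> Cn n U g -> Cn n U (fun x y => f x y + g x y).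
Proof.
revert f g; induction n as [|n IH]; intros f g Hf Hg;
  (split; [intros x y Hxy; apply (continuous_plus (fun z : R * R => f (fst z) (snd z)));
           [apply Hf | apply Hg]; exact Hxy|]).
- exact I.
- destruct Hf as [_ [Fd [Fx Fy]]], Hg as [_ [Gd [Gx Gy]]]. split; [|split].
  + intros x y Hxy. destruct (Fd x y Hxy), (Gd x y Hxy).
    split; apply (ex_derive_plus (V := R_NormedModule)); assumption.
  + apply (Cn_ext n (fun x y => partial_x f x y + partial_x g x y)); [|apply IH; assumption].
    intros x y Hxy. destruct (Fd x y Hxy), (Gd x y Hxy). symmetry. apply Derive_plus; assumption.
  + apply (Cn_ext n (fun x y => partial_y f x y + partial_y g x y)); [|apply IH; assumption].
    intros x y Hxy. destruct (Fd x y Hxy), (Gd x y Hxy). symmetry. apply Derive_plus; assumption.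
Qed.

Lemma Cn_mult n (f g : R -> R -> R) : Cn n U f -> Cn n U g -> Cn n U (fun x y => f x y * g x y).
Proof.
revert f g; induction n as [|n IH]; intros f g Hf Hg;
  (split; [intros x y Hxy; apply (continuous_mult (fun z : R * R => f (fst z) (snd z)));
           [apply Hf | apply Hg]; exact Hxy|]).
- exact I.
- pose proof (Cn_S_Cn _ _ _ Hf) as Mf. pose proof (Cn_S_Cn _ _ _ Hg) as Mg.
  destruct Hf as [_ [Fd [Fx Fy]]], Hg as [_ [Gd [Gx Gy]]]. split; [|split].
  + intros x y Hxy. destruct (Fd x y Hxy), (Gd x y Hxy). split; apply ex_derive_mult; assumption.
  + apply (Cn_ext n (fun x y => partial_x f x y * g x y + f x y * partial_x g x y)).
    * intros x y Hxy. destruct (Fd x y Hxy), (Gd x y Hxy). symmetry. apply Derive_mult; assumption.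
    * apply Cn_plus; apply IH; assumption.
  + apply (Cn_ext n (fun x y => partial_y f x y * g x y + f x y * partial_y g x y)).
    * intros x y Hxy. destruct (Fd x y Hxy), (Gd x y Hxy). symmetry. apply Derive_mult; assumption.
    * apply Cn_plus; apply IH; assumption.
Qed.

Lemma Cn_comp n W phi f : Cn1 n W phi -> Cn n U f -> (forall x y, U x y -> W (f x y)) ->
  Cn n U (fun x y => phi (f x y)).
Proof.
revert phi f; induction n as [|n IH]; intros phi f Hphi Hf HW;
  (split; [intros x y Hxy; apply (continuous_comp (fun z : R * R => f (fst z) (snd z)) phi);
           [apply Hf, Hxy | apply (Cn1_continuous _ _ _ Hphi), HW, Hxy]|]).
- exact I.
- pose proof (Cn_S_Cn _ _ _ Hf) as Mf. destruct Hphi as [Pd Pn]. destruct Hf as [_ [Fd [Fx Fy]]].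
  split; [|split].
  + intros x y Hxy. destruct (Fd x y Hxy).
    split; apply (ex_derive_comp phi); try apply Pd, HW, Hxy; assumption.
  + apply (Cn_ext n (fun x y => Derive phi (f x y) * partial_x f x y)).
    * intros x y Hxy. destruct (Fd x y Hxy). unfold partial_x.
      rewrite (Derive_comp phi (fun t => f t y)) by (try apply Pd, HW, Hxy; assumption). ring.
    * apply Cn_mult; [apply IH|]; assumption.
  + apply (Cn_ext n (fun x y => Derive phi (f x y) * partial_y f x y)).
    * intros x y Hxy. destruct (Fd x y Hxy). unfold partial_y.
      rewrite (Derive_comp phi (fun t => f x t)) by (try apply Pd, HW, Hxy; assumption). ring.
    * apply Cn_mult; [apply IH|]; assumption.
Qed.

Lemma Cn_opp n (f : R -> R -> R) : Cn n U f -> Cn n U (fun x y => - f x y).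
Proof.
intro Hf. apply (Cn_ext n (fun x y => -1 * f x y)); [intros; ring|].
apply Cn_mult; [apply Cn_const | exact Hf].
Qed.

Lemma Cn_minus n (f g : R -> R -> R) : Cn n U f -> Cn n U g -> Cn n U (fun x y => f x y - g x y).
Proof. intros Hf Hg. apply Cn_plus; [exact Hf | apply Cn_opp, Hg]. Qed.

Lemma Cn_pow2 n (f : R -> R -> R) : Cn n U f -> Cn n U (fun x y => f x y ^ 2).
Proof. intro Hf. apply (Cn_ext n (fun x y => f x y * f x y)); [intros; ring | apply Cn_mult; exact Hf]. Qed.

Lemma Cn_inv n (f : R -> R -> R) : Cn n U f -> (forall x y, U x y -> 0 < f x y) ->
  Cn n U (fun x y => / f x y).
Proof. intros Hf Hpos. apply (Cn_comp n (fun x => 0 < x) Rinv); [apply Cn1_inv | exact Hf | exact Hpos]. Qed.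

Lemma Cn_div n (f g : R -> R -> R) : Cn n U f -> Cn n U g -> (forall x y, U x y -> 0 < g x y) ->
  Cn n U (fun x y => f x y / g x y).
Proof. intros Hf Hg Hpos. apply Cn_mult; [exact Hf | apply Cn_inv; assumption]. Qed.

Lemma Cn_sqrt n (f : R -> R -> R) : Cn n U f -> (forall x y, U x y -> 0 < f x y) ->
  Cn n U (fun x y => sqrt (f x y)).
Proof. intros Hf Hpos. apply (Cn_comp n (fun x => 0 < x) sqrt); [apply Cn1_sqrt | exact Hf | exact Hpos]. Qed.

Lemma Cn_ln n (f : R -> R -> R) : Cn n U f -> (forall x y, U x y -> 0 < f x y) ->
  Cn n U (fun x y => ln (f x y)).
Proof. intros Hf Hpos. apply (Cn_comp n (fun x => 0 < x) ln); [apply Cn1_ln | exact Hf | exact Hpos]. Qed.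

Lemma Cn_exp n (f : R -> R -> R) : Cn n U f -> Cn n U (fun x y => exp (f x y)).
Proof. intro Hf. apply (Cn_comp n (fun _ => True) exp); [apply Cn1_exp | exact Hf | tauto]. Qed.

Lemma Cn_cosh n (f : R -> R -> R) : Cn n U f -> Cn n U (fun x y => cosh (f x y)).
Proof.
intro Hf. unfold cosh. apply (Cn_ext n (fun x y => (exp (f x y) + exp (- f x y)) * / 2)); [reflexivity|].
apply Cn_mult; [|apply Cn_const]. apply Cn_plus; apply Cn_exp; [|apply Cn_opp]; exact Hf.
Qed.

Lemma Cn_sinh n (f : R -> R -> R) : Cn n U f -> Cn n U (fun x y => sinh (f x y)).
Proof.
intro Hf. unfold sinh. apply (Cn_ext n (fun x y => (exp (f x y) - exp (- f x y)) * / 2)); [reflexivity|].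
apply Cn_mult; [|apply Cn_const]. apply Cn_minus; apply Cn_exp; [|apply Cn_opp]; exact Hf.
Qed.

End Calculus.


(** * The hyperbolic Kepler equation *)

Lemma is_derive_of_slope (f g : R -> R) x0 :
  locally x0 (fun x => f x - f x0 = (x - x0) * g x) -> continuous g x0 -> is_derive f x0 (g x0).
Proof.
intros [d1 H1] Hg. apply is_derive_Reals. intros eps Heps.
destruct (proj1 (filterlim_locally g (g x0)) Hg (mkposreal eps Heps)) as [d2 H2].
exists (mkposreal _ (Rmin_pos _ _ (cond_pos d1) (cond_pos d2))). simpl. intros h Hh0 Hh.
assert (Hb : forall d : posreal, Rmin d1 d2 <= d -> ball x0 d (x0 + h)).
{ intros d Hd. change (Rabs (x0 + h - x0) < d). replace (x0 + h - x0) with h by ring. lra. }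
rewrite (H1 _ (Hb d1 (Rmin_l _ _))).
replace ((x0 + h - x0) * g (x0 + h) / h) with (g (x0 + h)) by (field; exact Hh0).
exact (H2 _ (Hb d2 (Rmin_r _ _))).
Qed.

Lemma slope_of_is_derive (f : R -> R) x0 l : is_derive f x0 l ->
  exists g, continuous g x0 /\ g x0 = l /\ forall x, f x - f x0 = (x - x0) * g x.
Proof.
intro Hf. set (g x := if Req_EM_T x x0 then l else (f x - f x0) / (x - x0)).
assert (E0 : g x0 = l) by (unfold g; destruct Req_EM_T; congruence).
exists g. split; [|split; [exact E0|]].
- apply filterlim_locally. intro eps. apply is_derive_Reals in Hf.
  destruct (Hf eps (cond_pos eps)) as [d Hd]. exists d. intros x Hx.
  change (Rabs (x - x0) < d) in Hx. change (Rabs (g x - g x0) < eps).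
  rewrite E0. unfold g. destruct Req_EM_T as [->|Hne].
  + rewrite Rminus_eq_0, Rabs_R0. apply cond_pos.
  + specialize (Hd (x - x0)). rewrite Rplus_minus in Hd. apply Hd; [lra | exact Hx].
- intro x. unfold g. destruct Req_EM_T as [->|Hne]; [ring | field; lra].
Qed.

Lemma cosh_sqr x : cosh x ^ 2 = 1 + sinh x ^ 2.
Proof.
assert (E : exp x * exp (- x) = 1) by (rewrite <- exp_plus, Rplus_opp_r; apply exp_0).
unfold cosh, sinh. nra.
Qed.

Lemma cosh_ge_1 x : 1 <= cosh x.
Proof.
pose proof (cosh_sqr x). pose proof (pow2_ge_0 (sinh x)).
assert (0 < cosh x) by (unfold cosh; pose proof (exp_pos x); pose proof (exp_pos (- x)); lra). nra.
Qed.

Lemma cosh_plus_sinh x : cosh x + sinh x = exp x.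
Proof. unfold cosh, sinh. field. Qed.

Lemma cosh_opp x : cosh (- x) = cosh x.
Proof. unfold cosh. rewrite Ropp_involutive. field. Qed.

Lemma cosh_Rabs x : cosh (Rabs x) = cosh x.
Proof. unfold Rabs. destruct Rcase_abs; [apply cosh_opp | reflexivity]. Qed.

Lemma sinh_opp x : sinh (- x) = - sinh x.
Proof. unfold sinh. rewrite Ropp_involutive. field. Qed.

Lemma Rsqr_sinh_div s d : d <> 0 -> Rsqr (sinh s / d) = (cosh s ^ 2 - 1) / d ^ 2.
Proof. intro Hd. rewrite cosh_sqr. unfold Rsqr. field. exact Hd. Qed.

Lemma cosh_arcsinh w : cosh (arcsinh w) = sqrt (w ^ 2 + 1).
Proof.
rewrite <- (sinh_arcsinh w) at 2. rewrite Rplus_comm, <- cosh_sqr, sqrt_pow2; [reflexivity|].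
pose proof (cosh_ge_1 (arcsinh w)). lra.
Qed.

Lemma is_derive_arcsinh x : is_derive arcsinh x (/ sqrt (x ^ 2 + 1)).
Proof. apply is_derive_Reals, derivable_pt_lim_arcsinh. Qed.

Lemma arcsinh_arg_pos w : 0 < w + sqrt (w ^ 2 + 1).
Proof.
assert (Habs : Rabs w < sqrt (w ^ 2 + 1)).
{ rewrite <- sqrt_Rsqr_abs. apply sqrt_lt_1; [apply Rle_0_sqr | nra | unfold Rsqr; nra]. }
pose proof (Rabs_maj2 w). lra.
Qed.

Lemma MVT_sinh s0 s1 : exists xi, Rabs (xi - s0) <= Rabs (s1 - s0) /\
  sinh s1 - sinh s0 = cosh xi * (s1 - s0).
Proof.
destruct (MVT_gen sinh s0 s1 cosh) as [xi [Hxi E]].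
- intros x _. auto_derive; [exact I | ring].
- intros x _. apply continuity_pt_filterlim, (ex_derive_continuous sinh). auto_derive. exact I.
- exists xi. split; [|exact E]. destruct (Rle_dec s0 s1).
  + rewrite Rmin_left, Rmax_right in Hxi by lra. rewrite !Rabs_right by lra. lra.
  + rewrite Rmin_right, Rmax_left in Hxi by lra. rewrite !Rabs_left1 by lra. lra.
Qed.

Definition kepler (k s : R) : R := sinh s - k * s.

Lemma kepler_0 k : kepler k 0 = 0.
Proof. unfold kepler. rewrite sinh_0. ring. Qed.

Lemma kepler_opp k s : kepler k (- s) = - kepler k s.
Proof. unfold kepler. rewrite sinh_opp. ring. Qed.

Lemma kepler_mvt k0 k1 s0 s1 : exists xi, Rabs (xi - s0) <= Rabs (s1 - s0) /\
  (s1 - s0) * (cosh xi - k1) = (kepler k1 s1 + k1 * s0) - (kepler k0 s0 + k0 * s0).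
Proof.
destruct (MVT_sinh s0 s1) as [xi [Hxi E]]. exists xi. split; [exact Hxi|]. unfold kepler. nra.
Qed.

Lemma kepler_lt k s0 s1 : k < 1 -> s0 < s1 -> kepler k s0 < kepler k s1.
Proof.
intros Hk Hs. destruct (kepler_mvt k k s0 s1) as [xi [_ E]]. pose proof (cosh_ge_1 xi). nra.
Qed.

Lemma kepler_inj k s0 s1 : k < 1 -> kepler k s0 = kepler k s1 -> s0 = s1.
Proof.
intros Hk E. destruct (Rtotal_order s0 s1) as [H|[H|H]]; [|exact H|];
  apply (kepler_lt k) in H; lra.
Qed.

Lemma kepler_surj k y : k < 1 -> exists s, kepler k s = y.
Proof.
intro Hk. set (b := y / (1 - k)).
destruct (kepler_mvt k k 0 b) as [xi [_ E]]. rewrite kepler_0 in E. pose proof (cosh_ge_1 xi).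
assert (Hy : y = b * (1 - k)) by (unfold b; field; lra).
destruct (IVT_gen (kepler k) 0 b y) as [s [_ Hs]].
- intro x. apply continuity_pt_filterlim, (ex_derive_continuous (kepler k)).
  unfold kepler. auto_derive. exact I.
- rewrite kepler_0. destruct (Rle_dec 0 b).
  + rewrite Rmin_left, Rmax_right; nra.
  + rewrite Rmin_right, Rmax_left; nra.
- exists s. exact Hs.
Qed.

Definition kepler_inv (k y : R) : R := epsilon (inhabits 0) (fun s => kepler k s = y).

Lemma kepler_kepler_inv k y : k < 1 -> kepler k (kepler_inv k y) = y.
Proof. intro Hk. apply (epsilon_spec (inhabits 0) (fun s => kepler k s = y)), kepler_surj, Hk. Qed.

Lemma kepler_inv_kepler k s : k < 1 -> kepler_inv k (kepler k s) = s.
Proof. intro Hk. apply (kepler_inj k); [exact Hk|]. apply kepler_kepler_inv, Hk. Qed.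

Lemma continuous_locally_lt {T : UniformSpace} (f : T -> R) x c :
  continuous f x -> f x < c -> locally x (fun y => f y < c).
Proof.
intros Hf Hc. assert (Hd : 0 < c - f x) by lra.
generalize (proj1 (filterlim_locally f _) Hf (mkposreal _ Hd)). apply filter_imp.
intros y Hy. change (Rabs (f y - f x) < c - f x) in Hy. apply Rabs_def2 in Hy. lra.
Qed.

Lemma continuous_squeezed (s xi : R -> R) x0 :
  continuous s x0 -> (forall x, Rabs (xi x - s x0) <= Rabs (s x - s x0)) ->
  xi x0 = s x0 /\ continuous xi x0.
Proof.
intros Hs Hxi. assert (E : xi x0 = s x0).
{ pose proof (Hxi x0) as H. rewrite Rminus_eq_0, Rabs_R0 in H.
  pose proof (Rabs_pos (xi x0 - s x0)). apply Rminus_diag_uniq, Rabs_eq_0. lra. }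
split; [exact E|]. apply filterlim_locally. intro eps.
generalize (proj1 (filterlim_locally s _) Hs eps). apply filter_imp. intros x Hx.
change (Rabs (xi x - xi x0) < eps). change (Rabs (s x - s x0) < eps) in Hx.
rewrite E. pose proof (Hxi x). lra.
Qed.

Lemma continuous_kepler_inv {T : UniformSpace} (K Y : T -> R) z0 :
  continuous K z0 -> continuous Y z0 -> K z0 < 1 ->
  continuous (fun z => kepler_inv (K z) (Y z)) z0.
Proof.
intros HK HY Hk0. set (s0 := kepler_inv (K z0) (Y z0)). set (N z := Y z + K z * s0).
assert (HN : continuous N z0)
  by (apply (continuous_plus Y), (continuous_mult K), continuous_const; assumption).
set (d := (1 - K z0) / 2). assert (Hd : 0 < d) by (unfold d; lra).
apply filterlim_locally. intro eps.
assert (Hed : 0 < eps * d) by (apply Rmult_lt_0_compat; [apply cond_pos | exact Hd]).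
assert (Hk0d : K z0 < 1 - d) by (unfold d; lra).
generalize (filter_and _ _ (continuous_locally_lt K z0 (1 - d) HK Hk0d)
                           (proj1 (filterlim_locally N _) HN (mkposreal _ Hed))).
apply filter_imp. intros z [Bk Bn]. change (Rabs (N z - N z0) < eps * d) in Bn.
change (Rabs (kepler_inv (K z) (Y z) - s0) < eps).
(* By the mean value theorem [|s - s0| (cosh xi - K z) = |N z - N z0|], and [cosh xi - K z > d]. *)
destruct (kepler_mvt (K z0) (K z) s0 (kepler_inv (K z) (Y z))) as [xi [_ E]].
assert (E0 : kepler (K z0) s0 = Y z0) by (apply kepler_kepler_inv; lra).
rewrite E0, kepler_kepler_inv in E by lra. fold (N z) (N z0) in E. rewrite <- E in Bn.
pose proof (cosh_ge_1 xi). rewrite Rabs_mult, (Rabs_right (cosh xi - K z)) in Bn by lra.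
pose proof (cond_pos eps). pose proof (Rabs_pos (kepler_inv (K z) (Y z) - s0)). nra.
Qed.

Lemma is_derive_kepler_inv (K Y : R -> R) x0 dK dY :
  is_derive K x0 dK -> is_derive Y x0 dY -> K x0 < 1 ->
  is_derive (fun x => kepler_inv (K x) (Y x)) x0
    ((dY + dK * kepler_inv (K x0) (Y x0)) / (cosh (kepler_inv (K x0) (Y x0)) - K x0)).
Proof.
intros HK HY Hk0.
set (s x := kepler_inv (K x) (Y x)). set (s0 := s x0). set (N x := Y x + K x * s0).
assert (CK : continuous K x0) by (apply (ex_derive_continuous K); eexists; exact HK).
assert (Cs : continuous s x0)
  by (apply continuous_kepler_inv; [exact CK | apply (ex_derive_continuous Y); eexists; exact HY | exact Hk0]).
assert (HN : is_derive N x0 (dY + dK * s0))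
  by exact (is_derive_plus Y (fun x => K x * s0) x0 _ _ HY (is_derive_scal_l K x0 dK s0 HK)).
set (P x xi := Rabs (xi - s0) <= Rabs (s x - s0) /\
  (s x - s0) * (cosh xi - K x) = (kepler (K x) (s x) + K x * s0) - (kepler (K x0) s0 + K x0 * s0)).
set (xi x := epsilon (inhabits 0) (P x)).
assert (Hxi : forall x, P x (xi x))
  by (intro x; apply (epsilon_spec (inhabits 0) (P x)), kepler_mvt).
destruct (continuous_squeezed s xi x0 Cs (fun x => proj1 (Hxi x))) as [xi0 Cxi].
set (D x := cosh (xi x) - K x).
assert (CD : continuous D x0)
  by (apply (continuous_minus (fun x => cosh (xi x))), CK;
      apply (continuous_comp xi cosh x0 Cxi), (ex_derive_continuous cosh); auto_derive; exact I).
assert (D0 : D x0 = cosh s0 - K x0) by (unfold D; rewrite xi0; reflexivity).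
destruct (slope_of_is_derive N x0 _ HN) as [q [Cq [q0 Eq]]].
change (is_derive s x0 ((dY + dK * s0) / (cosh s0 - K x0))).
rewrite <- q0, <- D0. apply (is_derive_of_slope s (fun x => q x / D x)).
- generalize (continuous_locally_lt K x0 1 CK Hk0). apply filter_imp. intros x Hx.
  destruct (Hxi x) as [_ E]. pose proof (cosh_ge_1 (xi x)).
  assert (Es : kepler (K x) (s x) = Y x) by (apply kepler_kepler_inv, Hx).
  assert (E0 : kepler (K x0) s0 = Y x0) by (apply kepler_kepler_inv, Hk0).
  rewrite Es, E0 in E. fold (N x) (N x0) in E. rewrite Eq in E. fold (D x) in E.
  assert (HD : 0 < D x) by (unfold D; lra).
  fold s0. apply (Rmult_eq_reg_r (D x)); [rewrite E; field|]; lra.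
- apply (continuous_mult q (fun x => / D x)); [exact Cq|]. apply continuous_Rinv_comp; [exact CD|].
  rewrite D0. pose proof (cosh_ge_1 s0). lra.
Qed.

Lemma Cinf_kepler_inv (U : R -> R -> Prop) `{open_2d U} K Y :
  Cinf U K -> Cinf U Y -> (forall x y, U x y -> K x y < 1) ->
  Cinf U (fun x y => kepler_inv (K x y) (Y x y)).
Proof.
intros HK HY Hk. set (s x y := kepler_inv (K x y) (Y x y)).
assert (Cs : continuous_on_2d U s).
{ intros x y Hxy. apply (continuous_kepler_inv (fun z : R * R => K (fst z) (snd z))).
  - exact (Cn_continuous 0 U K (HK 0%nat) x y Hxy).
  - exact (Cn_continuous 0 U Y (HY 0%nat) x y Hxy).
  - exact (Hk x y Hxy). }
destruct (HK 1%nat) as [_ [DK _]], (HY 1%nat) as [_ [DY _]].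
assert (Ds : forall x y, U x y ->
  is_derive (fun t => s t y) x
    ((partial_x Y x y + partial_x K x y * s x y) / (cosh (s x y) - K x y)) /\
  is_derive (fun t => s x t) y
    ((partial_y Y x y + partial_y K x y * s x y) / (cosh (s x y) - K x y))).
{ intros x y Hxy. destruct (DK x y Hxy), (DY x y Hxy).
  split; [apply (is_derive_kepler_inv (fun t => K t y) (fun t => Y t y))
        | apply (is_derive_kepler_inv (fun t => K x t) (fun t => Y x t))];
  try apply Derive_correct; try exact (Hk x y Hxy); assumption. }
assert (Hpos : forall x y, U x y -> 0 < cosh (s x y) - K x y)
  by (intros x y Hxy; pose proof (cosh_ge_1 (s x y)); pose proof (Hk x y Hxy); lra).
intro n. induction n as [|n IH]; (split; [exact Cs|]); [exact I|].
destruct (HK (S n)) as [_ [_ [Kx Ky]]], (HY (S n)) as [_ [_ [Yx Yy]]]. pose proof (HK n).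
split; [|split].
- intros x y Hxy. destruct (Ds x y Hxy). split; eexists; eassumption.
- apply (Cn_ext n (fun x y => (partial_x Y x y + partial_x K x y * s x y) / (cosh (s x y) - K x y))).
  + intros x y Hxy. symmetry. apply is_derive_unique, Ds, Hxy.
  + apply Cn_div; [apply Cn_plus; [|apply Cn_mult] | apply Cn_minus; [apply Cn_cosh|] | exact Hpos];
    auto.
- apply (Cn_ext n (fun x y => (partial_y Y x y + partial_y K x y * s x y) / (cosh (s x y) - K x y))).
  + intros x y Hxy. symmetry. apply is_derive_unique, Ds, Hxy.
  + apply Cn_div; [apply Cn_plus; [|apply Cn_mult] | apply Cn_minus; [apply Cn_cosh|] | exact Hpos];
    auto.
Qed.

Definition same_sign (x y : R) : Prop := (0 < x <-> 0 < y) /\ (x < 0 <-> y < 0).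

Lemma same_sign_sym x y : same_sign x y -> same_sign y x.
Proof. unfold same_sign. tauto. Qed.

Lemma same_sign_trans x y z : same_sign x y -> same_sign y z -> same_sign x z.
Proof. unfold same_sign. tauto. Qed.

Lemma same_sign_increasing (f : R -> R) x :
  (forall a b, a < b -> f a < f b) -> f 0 = 0 -> same_sign x (f x).
Proof.
intros Hf H0. split; split; intro H.
- rewrite <- H0. apply Hf, H.
- destruct (Rle_lt_dec x 0) as [[Hx|Hx]|Hx]; [apply Hf in Hx | subst x | exact Hx]; lra.
- rewrite <- H0. apply Hf, H.
- destruct (Rle_lt_dec 0 x) as [[Hx|Hx]|Hx]; [apply Hf in Hx | subst x | exact Hx]; lra.
Qed.

Lemma same_sign_sinh s : same_sign s (sinh s).
Proof. apply same_sign_increasing; [exact sinh_lt | exact sinh_0]. Qed.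

Lemma same_sign_kepler k s : k < 1 -> same_sign s (kepler k s).
Proof. intro Hk. apply same_sign_increasing; [intros; apply kepler_lt; assumption | apply kepler_0]. Qed.

Lemma same_sign_mult_pos x c : 0 < c -> same_sign x (x * c).
Proof. intro Hc. apply (same_sign_increasing (fun x => x * c)); [intros; nra | ring]. Qed.

Lemma sgn_mult_Rabs x y : same_sign x y -> sgn x * Rabs y = y.
Proof.
intros [Hp Hn]. unfold sgn. destruct Rcase_abs as [Hx|Hx].
- rewrite Rabs_left by (apply Hn, Hx). ring.
- destruct Req_EM_T as [->|Hx0].
  + assert (y = 0) by (destruct (Rtotal_order y 0) as [H|[H|H]]; [apply Hn in H | | apply Hp in H]; lra).
    subst y. rewrite Rabs_R0. ring.
  + rewrite Rabs_right by (left; apply Hp; lra). ring.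
Qed.

Lemma Rabs_kepler k s : k < 1 -> Rabs (kepler k s) = kepler k (Rabs s).
Proof.
intro Hk. destruct (same_sign_kepler k s Hk) as [Hp Hn]. destruct (Rle_lt_dec 0 s) as [[Hs|Hs]|Hs].
- rewrite !Rabs_right by (try apply Rle_ge, Rlt_le, Hp; lra). reflexivity.
- subst s. rewrite Rabs_R0, kepler_0, Rabs_R0. reflexivity.
- rewrite !Rabs_left by (try apply Hn; lra). rewrite kepler_opp. reflexivity.
Qed.

Lemma G_cosh k s : 0 <= s -> G k (cosh s) = kepler k s.
Proof.
intro Hs. unfold G, kepler.
rewrite cosh_sqr. replace (1 + sinh s ^ 2 - 1) with (sinh s ^ 2) by ring.
assert (0 <= sinh s) by (destruct Hs as [Hs| <-]; [left; apply (same_sign_sinh s), Hs | rewrite sinh_0; lra]).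
rewrite sqrt_pow2 by assumption.
rewrite cosh_plus_sinh, ln_exp. ring.
Qed.

Lemma G_cosh_Rabs k s : k < 1 -> G k (cosh s) = Rabs (kepler k s).
Proof. intro Hk. rewrite <- cosh_Rabs, G_cosh, Rabs_kepler by (try apply Rabs_pos; exact Hk). reflexivity. Qed.

Lemma cosh_surj x : 1 <= x -> exists s, 0 <= s /\ cosh s = x.
Proof.
intro Hx. exists (arcsinh (sqrt (x ^ 2 - 1))). split.
- rewrite <- arcsinh_0. apply arcsinh_le, sqrt_pos.
- rewrite cosh_arcsinh, pow2_sqrt by nra. replace (x ^ 2 - 1 + 1) with (x ^ 2) by ring.
  apply sqrt_pow2. lra.
Qed.

Lemma H_kepler k s : k < 1 -> 0 <= s -> H k (kepler k s) = cosh s.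
Proof.
intros Hk Hs. unfold H.
set (P x := 1 <= x /\ G k x = kepler k s).
assert (Ex : exists x, P x) by (exists (cosh s); split; [apply cosh_ge_1 | apply G_cosh, Hs]).
destruct (epsilon_spec (inhabits 1) P Ex) as [H1 H2].
destruct (cosh_surj _ H1) as [s' [Hs' E]]. rewrite <- E in H2 |- *.
rewrite G_cosh in H2 by exact Hs'. apply kepler_inj in H2; [congruence | exact Hk].
Qed.

Lemma is_derive_affine_comp (f : R -> R) th a t df :
  is_derive f (th + t * a) df -> is_derive (fun s => f (th + s * a)) t (a * df).
Proof.
intro Hf. apply (is_derive_comp f (fun s => th + s * a)); [exact Hf|].
auto_derive; [exact I | ring].
Qed.

Lemma Rbar_interval_nonempty lo hi : Rbar_lt lo hi -> exists t : R, Rbar_lt lo t /\ Rbar_lt t hi.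
Proof.
destruct lo as [a| |], hi as [b| |]; simpl; intro H; try contradiction.
- exists ((a + b) / 2). simpl. lra.
- exists (a + 1). simpl. split; [lra | exact I].
- exists (b - 1). simpl. split; [exact I | lra].
- exists 0. simpl. tauto.
Qed.

Lemma Rbar_interval_convex (lo hi : Rbar) (t0 t1 x : R) :
  Rbar_lt lo t0 -> Rbar_lt t0 hi -> Rbar_lt lo t1 -> Rbar_lt t1 hi ->
  Rmin t0 t1 <= x <= Rmax t0 t1 -> Rbar_lt lo x /\ Rbar_lt x hi.
Proof.
intros H0 H0' H1 H1' Hx. split.
- apply Rbar_lt_le_trans with (Rmin t0 t1); [|exact (proj1 Hx)].
  unfold Rmin. destruct Rle_dec; assumption.
- apply Rbar_le_lt_trans with (Rmax t0 t1); [exact (proj2 Hx)|].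
  unfold Rmax. destruct Rle_dec; assumption.
Qed.

Lemma is_derive_0_Rbar_interval_const (f : R -> R) (lo hi : Rbar) (t0 t1 : R) :
  (forall t : R, Rbar_lt lo t -> Rbar_lt t hi -> is_derive f t 0) ->
  Rbar_lt lo t0 -> Rbar_lt t0 hi -> Rbar_lt lo t1 -> Rbar_lt t1 hi -> f t1 = f t0.
Proof.
intros Hf H0 H0' H1 H1'.
assert (Hin : forall x, Rmin t0 t1 <= x <= Rmax t0 t1 -> is_derive f x 0).
{ intros x Hx. destruct (Rbar_interval_convex lo hi t0 t1 x H0 H0' H1 H1' Hx). apply Hf; assumption. }
destruct (MVT_gen f t0 t1 (fun _ => 0)) as [c [_ E]]; [| | cbv beta in E; lra].
- intros x Hx. apply Hin. lra.
- intros x Hx. apply continuity_pt_filterlim, (ex_derive_continuous f). eexists. apply Hin, Hx.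
Qed.


(** * Angle-action coordinates *)

#[export] Instance open_2d_Hplane : open_2d Hplane.
Proof.
intros x y Hy. exists (mkposreal y Hy). intros u v _ Hv. simpl in Hv. apply Rabs_def2 in Hv. unfold Hplane. lra.
Qed.

#[export] Instance open_2d_right_half_plane : open_2d (fun r _ => 0 < r).
Proof.
intros x y Hx. exists (mkposreal x Hx). intros u v Hu _. simpl in Hu. apply Rabs_def2 in Hu. lra.
Qed.

Lemma Cn_energy (U : R -> R -> Prop) `{open_2d U} n m l : (forall r v, U r v -> 0 < r) ->
  Cn n U (fun r v => v ^ 2 - m / r + l / r ^ 2).
Proof.
intro Hr. assert (Hr2 : forall r v, U r v -> 0 < r ^ 2) by (intros r v Hrv; apply pow_lt, (Hr r v Hrv)).
apply Cn_plus; [apply Cn_minus|]; [apply Cn_pow2, Cn_snd | apply Cn_div | apply Cn_div];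
  auto using Cn_const, Cn_fst, Cn_pow2.
Qed.

#[export] Instance open_2d_Dl m l : open_2d (Dl m l).
Proof.
intros r v [hr hE]. apply (proj2 (locally_2d_locally (Dl m l) r v)).
assert (HE : continuous (fun z : R * R => snd z ^ 2 - m / fst z + l / fst z ^ 2) (r, v))
  by exact (Cn_continuous 0 _ _ (Cn_energy (fun r _ => 0 < r) 0 m l (fun r _ H => H)) r v hr).
assert (Hd : 0 < v ^ 2 - m / r + l / r ^ 2) by lra.
generalize (filter_and _ _ (proj1 (filterlim_locally _ _) HE (mkposreal _ Hd))
                           (proj1 (locally_2d_locally _ r v) (locally_2d_of_open r v hr))).
apply filter_imp. intros [x y] [Hb Hx]. simpl in Hb, Hx.
change (Rabs (y ^ 2 - m / x + l / x ^ 2 - (v ^ 2 - m / r + l / r ^ 2)) < v ^ 2 - m / r + l / r ^ 2) in Hb.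
apply Rabs_def2 in Hb. destruct Hb. split; [exact Hx|]. change (y ^ 2 - m / x + l / x ^ 2 > 0). lra.
Qed.

Section Orbits.

Variables m l : R.
Hypothesis hm : 0 < m.
Hypothesis hl : 0 < l.

Lemma kappa_radicand_pos a : 0 < a -> 0 < 4 * a ^ 2 * l / m ^ 2.
Proof.
intro ha. apply Rdiv_lt_0_compat; [|apply pow_lt, hm].
apply Rmult_lt_0_compat; [apply Rmult_lt_0_compat; [lra | apply pow_lt, ha] | exact hl].
Qed.

Lemma kappa_bounds a : 0 < a -> 0 < kappa m a l < 1.
Proof.
intro ha. unfold kappa. pose proof (kappa_radicand_pos a ha).
assert (HS : 1 < sqrt (1 + 4 * a ^ 2 * l / m ^ 2)) by (rewrite <- sqrt_1 at 1; apply sqrt_lt_1; lra).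
split; [apply Rinv_0_lt_compat; lra|]. rewrite <- Rinv_1 at 2. apply Rinv_lt_contravar; lra.
Qed.

Lemma pp_pos a : 0 < a -> 0 < pp m a l.
Proof.
intro ha. destruct (kappa_bounds a ha). unfold pp. apply Rdiv_lt_0_compat; [exact hm|].
apply Rmult_lt_0_compat; [nra | assumption].
Qed.

Lemma orbit_relations a : 0 < a ->
  m = 2 * a ^ 2 * kappa m a l * pp m a l /\ l = a ^ 2 * pp m a l ^ 2 * (1 - kappa m a l ^ 2).
Proof.
intro ha. destruct (kappa_bounds a ha). unfold pp. split; [field; nra|].
assert (Hl : l = m ^ 2 * (1 - kappa m a l ^ 2) / (4 * a ^ 2 * kappa m a l ^ 2)).
{ unfold kappa. pose proof (kappa_radicand_pos a ha).
  rewrite pow_inv, pow2_sqrt by lra. field. split; nra. }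
rewrite Hl at 1. field. nra.
Qed.

Lemma is_derive_kappa a : 0 < a ->
  is_derive (fun b => kappa m b l) a (- kappa m a l * (1 - kappa m a l ^ 2) / a).
Proof.
intro ha. pose proof (kappa_radicand_pos a ha).
assert (HS : 0 < sqrt (1 + 4 * a ^ 2 * l / m ^ 2)) by (apply sqrt_lt_R0; lra).
unfold kappa. auto_derive.
- replace (4 * (a * (a * 1)) * l * / (m * (m * 1))) with (4 * a ^ 2 * l / m ^ 2) by (field; lra). lra.
- replace (4 * (a * (a * 1)) * l * / (m * (m * 1))) with (4 * a ^ 2 * l / m ^ 2) by (field; lra).
  set (S := sqrt (1 + 4 * a ^ 2 * l / m ^ 2)) in *.
  assert (Hl : l = (S * S - 1) * m ^ 2 / (4 * a ^ 2))
    by (unfold S; rewrite sqrt_sqrt by lra; field; lra).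
  clearbody S. subst l. field. lra.
Qed.

Lemma is_derive_pp a : 0 < a ->
  is_derive (fun b => pp m b l) a (- pp m a l * (1 + kappa m a l ^ 2) / a).
Proof.
intro ha. destruct (kappa_bounds a ha). pose proof (is_derive_kappa a ha) as Dk.
unfold pp. auto_derive.
- repeat split; [eexists; exact Dk|]. apply Rgt_not_eq, Rmult_lt_0_compat; [nra | assumption].
- rewrite (is_derive_unique (fun x : R => kappa m x l) a _ Dk). field. lra.
Qed.

(* The hyperbolic eccentric anomaly of the orbit: [kepler k s = th / p] is the hyperbolic
   Kepler equation [e sinh s - s = M] with eccentricity [e = 1 / k], multiplied by [k]. *)
Definition anomaly (th a : R) : R := kepler_inv (kappa m a l) (th / pp m a l).

Lemma kepler_anomaly th a : 0 < a -> kepler (kappa m a l) (anomaly th a) = th / pp m a l.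
Proof. intro ha. apply kepler_kepler_inv, kappa_bounds, ha. Qed.

Lemma same_sign_anomaly th a : 0 < a -> same_sign th (anomaly th a).
Proof.
intro ha. destruct (kappa_bounds a ha). pose proof (pp_pos a ha).
apply (same_sign_trans _ (th / pp m a l)); [apply same_sign_mult_pos, Rinv_0_lt_compat; assumption|].
rewrite <- kepler_anomaly by exact ha. apply same_sign_sym, same_sign_kepler. assumption.
Qed.

Lemma Rf_anomaly th a : 0 < a -> Rf m l th a = pp m a l * (cosh (anomaly th a) - kappa m a l).
Proof.
intro ha. destruct (kappa_bounds a ha). pose proof (pp_pos a ha). unfold Rf.
replace (Rabs th / pp m a l) with (kepler (kappa m a l) (Rabs (anomaly th a))).
- rewrite H_kepler, cosh_Rabs by (try apply Rabs_pos; assumption). ring.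
- rewrite <- Rabs_kepler, kepler_anomaly by assumption.
  unfold Rdiv. rewrite Rabs_mult, (Rabs_right (/ _)) by (apply Rle_ge, Rlt_le, Rinv_0_lt_compat; assumption).
  reflexivity.
Qed.

Lemma Vf_anomaly th a : 0 < a ->
  Vf m l th a = a * sinh (anomaly th a) / (cosh (anomaly th a) - kappa m a l).
Proof.
intro ha. destruct (kappa_bounds a ha). pose proof (pp_pos a ha). destruct (orbit_relations a ha) as [Hm Hl].
unfold Vf. rewrite Rf_anomaly by exact ha.
assert (Hsg : sgn th * Rabs (sinh (anomaly th a)) = sinh (anomaly th a))
  by (apply sgn_mult_Rabs, (same_sign_trans _ _ _ (same_sign_anomaly th a ha)), same_sign_sinh).
set (s := anomaly th a) in *. set (k := kappa m a l) in *. set (p := pp m a l) in *.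
pose proof (cosh_ge_1 s). pose proof (cosh_sqr s).
replace (1 + m / (a ^ 2 * (p * (cosh s - k))) - l / (a ^ 2 * (p * (cosh s - k)) ^ 2))
  with (Rsqr (sinh s / (cosh s - k))).
- rewrite sqrt_Rsqr_abs, Rabs_div, (Rabs_right (cosh s - k)) by lra. rewrite <- Hsg at 2. field. lra.
- rewrite Hm, Hl, Rsqr_sinh_div by lra. field. split; [lra | split; [nra | lra]].
Qed.

Lemma energy_RV th a : 0 < a ->
  Vf m l th a ^ 2 - m / Rf m l th a + l / Rf m l th a ^ 2 = a ^ 2.
Proof.
intro ha. destruct (kappa_bounds a ha). pose proof (pp_pos a ha). destruct (orbit_relations a ha) as [Hm Hl].
rewrite Rf_anomaly, Vf_anomaly by exact ha.
set (s := anomaly th a). set (k := kappa m a l) in *. set (p := pp m a l) in *.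
pose proof (cosh_ge_1 s).
replace ((a * sinh s / (cosh s - k)) ^ 2) with (a ^ 2 * Rsqr (sinh s / (cosh s - k))) by (unfold Rsqr; field; lra).
rewrite Hm, Hl, Rsqr_sinh_div by lra. field. split; lra.
Qed.

Lemma Rf_pos th a : 0 < a -> 0 < Rf m l th a.
Proof.
intro ha. destruct (kappa_bounds a ha). pose proof (pp_pos a ha). pose proof (cosh_ge_1 (anomaly th a)).
rewrite Rf_anomaly by exact ha. apply Rmult_lt_0_compat; lra.
Qed.

Lemma Dl_RV th a : 0 < a -> Dl m l (Rf m l th a) (Vf m l th a).
Proof. intro ha. split; [apply Rf_pos, ha|]. rewrite energy_RV by exact ha. apply pow_lt, ha. Qed.

Lemma Af_pos r v : Dl m l r v -> 0 < Af m l r v.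
Proof. intros [_ HE]. apply sqrt_lt_R0, HE. Qed.

Lemma Af_sqr r v : Dl m l r v -> Af m l r v ^ 2 = v ^ 2 - m / r + l / r ^ 2.
Proof. intros [_ HE]. apply pow2_sqrt. lra. Qed.

Lemma Af_RV th a : 0 < a -> Af m l (Rf m l th a) (Vf m l th a) = a.
Proof. intro ha. unfold Af. rewrite energy_RV by exact ha. apply sqrt_pow2. lra. Qed.

Definition sinh_anomaly_at (a r v : R) : R := v * (r / (a * pp m a l)).

(* [Thf] with the action frozen at [a] (see [Thf_angle_at]); along a solution the action is
   conserved, and it is this expression that is differentiated. *)
Definition angle_at (a r v : R) : R := pp m a l * kepler (kappa m a l) (arcsinh (sinh_anomaly_at a r v)).

Lemma cosh_arcsinh_sinh_anomaly_at a r v : 0 < a -> 0 < r -> a ^ 2 = v ^ 2 - m / r + l / r ^ 2 ->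
  cosh (arcsinh (sinh_anomaly_at a r v)) = r / pp m a l + kappa m a l.
Proof.
intros ha hr HA. unfold sinh_anomaly_at.
destruct (kappa_bounds a ha). pose proof (pp_pos a ha). destruct (orbit_relations a ha) as [Hm Hl].
set (k := kappa m a l) in *. set (p := pp m a l) in *.
assert (0 < r / p) by (apply Rdiv_lt_0_compat; lra).
rewrite cosh_arcsinh, <- (sqrt_pow2 (r / p + k)) by lra.
f_equal. replace ((v * (r / (a * p))) ^ 2) with (v ^ 2 * r ^ 2 / (a ^ 2 * p ^ 2)) by (field; lra).
replace (v ^ 2) with (a ^ 2 + m / r - l / r ^ 2) by lra. rewrite Hm, Hl. field. lra.
Qed.

Lemma Thf_angle_at r v : Dl m l r v -> Thf m l r v = angle_at (Af m l r v) r v.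
Proof.
intro HD. pose proof (Af_pos r v HD) as ha. pose proof (Af_sqr r v HD) as HA. destruct HD as [hr _].
unfold Thf, angle_at. cbv zeta. set (a := Af m l r v) in *.
destruct (kappa_bounds a ha). pose proof (pp_pos a ha).
rewrite <- (cosh_arcsinh_sinh_anomaly_at a r v), G_cosh_Rabs by assumption. unfold sinh_anomaly_at.
rewrite (Rmult_comm (sgn v)), Rmult_assoc, sgn_mult_Rabs; [reflexivity|].
apply (same_sign_trans _ (v * (r / (a * pp m a l)))).
- apply same_sign_mult_pos, Rdiv_lt_0_compat; [|apply Rmult_lt_0_compat]; assumption.
- apply (same_sign_trans _ _ _ (same_sign_increasing arcsinh _ arcsinh_lt arcsinh_0)), same_sign_kepler.
  assumption.
Qed.

Lemma left_inverse th a : 0 < a ->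
  Thf m l (Rf m l th a) (Vf m l th a) = th /\ Af m l (Rf m l th a) (Vf m l th a) = a.
Proof.
intro ha. split; [|apply Af_RV, ha].
destruct (kappa_bounds a ha). pose proof (pp_pos a ha). pose proof (cosh_ge_1 (anomaly th a)).
rewrite Thf_angle_at by (apply Dl_RV, ha). rewrite Af_RV by exact ha. unfold angle_at, sinh_anomaly_at.
replace (Vf m l th a * (Rf m l th a / (a * pp m a l))) with (sinh (anomaly th a)).
- rewrite arcsinh_sinh, kepler_anomaly by exact ha. field. lra.
- rewrite Rf_anomaly, Vf_anomaly by exact ha. field. lra.
Qed.

Lemma right_inverse r v : Dl m l r v ->
  Rf m l (Thf m l r v) (Af m l r v) = r /\ Vf m l (Thf m l r v) (Af m l r v) = v.
Proof.
intro HD. pose proof (Af_pos r v HD) as ha. pose proof (Af_sqr r v HD) as HA.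
rewrite Thf_angle_at by exact HD. destruct HD as [hr _]. set (a := Af m l r v) in *.
pose proof (cosh_arcsinh_sinh_anomaly_at a r v ha hr HA) as Hc.
unfold angle_at, sinh_anomaly_at in *. destruct (kappa_bounds a ha). pose proof (pp_pos a ha).
set (w := v * (r / (a * pp m a l))) in *.
assert (Hs : anomaly (pp m a l * kepler (kappa m a l) (arcsinh w)) a = arcsinh w).
{ unfold anomaly. replace (pp m a l * kepler (kappa m a l) (arcsinh w) / pp m a l)
    with (kepler (kappa m a l) (arcsinh w)) by (field; lra).
  apply kepler_inv_kepler. assumption. }
rewrite Rf_anomaly, Vf_anomaly, Hs, Hc, sinh_arcsinh by exact ha. unfold w.
split; field; repeat split; lra.
Qed.

Section Smoothness.

Context {U : R -> R -> Prop} {HU : open_2d U}.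

Lemma Cn_kappa n A : Cn n U A -> Cn n U (fun x y => kappa m (A x y) l).
Proof.
intro HA. assert (Hpos : forall x y, 0 < 1 + 4 * A x y ^ 2 * l / m ^ 2).
{ intros x y. assert (0 <= 4 * A x y ^ 2 * l / m ^ 2); [|lra].
  apply Rmult_le_pos; [pose proof (pow2_ge_0 (A x y)); nra | apply Rlt_le, Rinv_0_lt_compat, pow_lt, hm]. }
unfold kappa. apply Cn_inv; [|intros; apply sqrt_lt_R0, Hpos].
apply Cn_sqrt; [|intros; apply Hpos].
apply Cn_plus; [apply Cn_const|]. apply Cn_mult; [|apply Cn_const].
apply Cn_mult; [apply Cn_mult; [apply Cn_const | apply Cn_pow2, HA] | apply Cn_const].
Qed.

Lemma Cn_pp n A : Cn n U A -> (forall x y, U x y -> 0 < A x y) -> Cn n U (fun x y => pp m (A x y) l).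
Proof.
intros HA Apos. unfold pp. apply Cn_div; [apply Cn_const | |].
- apply Cn_mult; [apply Cn_mult; [apply Cn_const | apply Cn_pow2, HA] | apply Cn_kappa, HA].
- intros x y Hxy. pose proof (Apos x y Hxy). destruct (kappa_bounds (A x y)); [assumption|].
  apply Rmult_lt_0_compat; [nra | assumption].
Qed.

End Smoothness.

Lemma Cinf_anomaly : Cinf Hplane anomaly.
Proof.
apply (Cinf_kepler_inv Hplane (fun _ a => kappa m a l) (fun th a => th / pp m a l)).
- intro n. apply Cn_kappa, Cn_snd.
- intro n. apply Cn_div; [apply Cn_fst | apply Cn_pp; [apply Cn_snd | intros x y H; exact H] |].
  intros x y H. apply pp_pos, H.
- intros x y H. apply kappa_bounds, H.
Qed.

Lemma Cinf_Rf : Cinf Hplane (Rf m l).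
Proof.
intro n. apply (Cn_ext n (fun th a => pp m a l * (cosh (anomaly th a) - kappa m a l))).
- intros th a Ha. symmetry. apply Rf_anomaly, Ha.
- apply Cn_mult; [apply Cn_pp; [apply Cn_snd | intros x y H; exact H]|].
  apply Cn_minus; [apply Cn_cosh, Cinf_anomaly | apply Cn_kappa, Cn_snd].
Qed.

Lemma Cinf_Vf : Cinf Hplane (Vf m l).
Proof.
intro n. apply (Cn_ext n (fun th a => a * sinh (anomaly th a) / (cosh (anomaly th a) - kappa m a l))).
- intros th a Ha. symmetry. apply Vf_anomaly, Ha.
- apply Cn_div; [apply Cn_mult; [apply Cn_snd | apply Cn_sinh, Cinf_anomaly] | |].
  + apply Cn_minus; [apply Cn_cosh, Cinf_anomaly | apply Cn_kappa, Cn_snd].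
  + intros th a Ha. pose proof (cosh_ge_1 (anomaly th a)). destruct (kappa_bounds a Ha). lra.
Qed.

Lemma Cinf_Af : Cinf (Dl m l) (Af m l).
Proof.
intro n. apply Cn_sqrt; [apply (Cn_energy (Dl m l)); intros r v [hr _]; exact hr | intros r v [_ HE]; exact HE].
Qed.

Lemma Cinf_Thf : Cinf (Dl m l) (Thf m l).
Proof.
intro n. set (w r v := sinh_anomaly_at (Af m l r v) r v).
assert (HP : Cn n (Dl m l) (fun r v => pp m (Af m l r v) l)) by (apply Cn_pp; [apply Cinf_Af | apply Af_pos]).
assert (HK : Cn n (Dl m l) (fun r v => kappa m (Af m l r v) l)) by (apply Cn_kappa, Cinf_Af).
assert (Hw : Cn n (Dl m l) w).
{ apply Cn_mult; [apply Cn_snd|]. apply Cn_div; [apply Cn_fst | apply Cn_mult; [apply Cinf_Af | exact HP] |].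
  intros r v HD. apply Rmult_lt_0_compat; [apply Af_pos, HD | apply pp_pos, Af_pos, HD]. }
apply (Cn_ext n (fun r v => pp m (Af m l r v) l * (w r v - kappa m (Af m l r v) l * arcsinh (w r v)))).
- intros r v HD. rewrite Thf_angle_at by exact HD. unfold angle_at, kepler. rewrite sinh_arcsinh. reflexivity.
- apply Cn_mult; [exact HP|]. apply Cn_minus; [exact Hw|]. apply Cn_mult; [exact HK|].
  unfold arcsinh. apply Cn_ln; [|intros; apply arcsinh_arg_pos].
  apply Cn_plus; [exact Hw|]. apply Cn_sqrt; [apply Cn_plus; [apply Cn_pow2, Hw | apply Cn_const]|].
  intros r v _. pose proof (pow2_ge_0 (w r v)). lra.
Qed.

Lemma is_derive_anomaly_th th a : 0 < a ->
  is_derive (fun t => anomaly t a) th (/ (pp m a l * (cosh (anomaly th a) - kappa m a l))).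
Proof.
intro ha. destruct (kappa_bounds a ha). pose proof (pp_pos a ha). pose proof (cosh_ge_1 (anomaly th a)).
replace (/ (pp m a l * (cosh (anomaly th a) - kappa m a l)))
  with ((/ pp m a l + 0 * anomaly th a) / (cosh (anomaly th a) - kappa m a l)) by (field; lra).
apply (is_derive_kepler_inv (fun _ => kappa m a l) (fun t => t / pp m a l));
  [exact (is_derive_const (kappa m a l) th) | | assumption].
auto_derive; [lra | field; lra].
Qed.

Lemma ex_derive_anomaly_a th a : 0 < a -> ex_derive (fun b => anomaly th b) a.
Proof.
intro ha. destruct (kappa_bounds a ha). pose proof (pp_pos a ha). pose proof (is_derive_pp a ha) as Dp.
eexists. apply (is_derive_kepler_inv (fun b => kappa m b l) (fun b => th / pp m b l));
  [apply is_derive_kappa, ha | apply Derive_correct | assumption].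
auto_derive. split; [eexists; exact Dp | lra].
Qed.

Lemma is_derive_Rf_th th a : 0 < a ->
  is_derive (fun t => Rf m l t a) th (sinh (anomaly th a) / (cosh (anomaly th a) - kappa m a l)).
Proof.
intro ha. destruct (kappa_bounds a ha). pose proof (pp_pos a ha). pose proof (cosh_ge_1 (anomaly th a)).
pose proof (is_derive_anomaly_th th a ha) as Ds.
apply (is_derive_ext (fun t => pp m a l * (cosh (anomaly t a) - kappa m a l))).
{ intro t. symmetry. apply Rf_anomaly, ha. }
auto_derive; [eexists; exact Ds|]. rewrite (is_derive_unique (fun x : R => anomaly x a) th _ Ds).
field. lra.
Qed.

Lemma is_derive_Vf_th th a : 0 < a ->
  is_derive (fun t => Vf m l t a) th
    (a * (1 - kappa m a l * cosh (anomaly th a)) / (pp m a l * (cosh (anomaly th a) - kappa m a l) ^ 3)).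
Proof.
intro ha. destruct (kappa_bounds a ha). pose proof (pp_pos a ha). pose proof (cosh_ge_1 (anomaly th a)).
pose proof (is_derive_anomaly_th th a ha) as Ds.
apply (is_derive_ext (fun t => a * sinh (anomaly t a) / (cosh (anomaly t a) - kappa m a l))).
{ intro t. symmetry. apply Vf_anomaly, ha. }
auto_derive; [repeat split; try (eexists; exact Ds); lra|].
rewrite (is_derive_unique (fun x : R => anomaly x a) th _ Ds).
set (s := anomaly th a) in *. set (k := kappa m a l) in *. set (p := pp m a l) in *.
(* The two sides differ by a multiple of [cosh s ^ 2 - sinh s ^ 2 - 1]. *)
transitivity (a * (1 - k * cosh s) / (p * (cosh s - k) ^ 3)
              + a * (cosh s ^ 2 - sinh s ^ 2 - 1) / (p * (cosh s - k) ^ 3)).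
- field. split; lra.
- rewrite cosh_sqr. field. split; lra.
Qed.

Lemma is_derive_Rf_a th a : 0 < a ->
  is_derive (fun b => Rf m l th b) a
    (- pp m a l * (1 + kappa m a l ^ 2) / a * (cosh (anomaly th a) - kappa m a l)
     + pp m a l * (sinh (anomaly th a) * Derive (fun b => anomaly th b) a
                   + kappa m a l * (1 - kappa m a l ^ 2) / a)).
Proof.
intro ha. pose proof (is_derive_kappa a ha) as Dk. pose proof (is_derive_pp a ha) as Dp.
apply (is_derive_ext_loc (fun b => pp m b l * (cosh (anomaly th b) - kappa m b l))).
{ generalize (open_1d_pos a ha). apply filter_imp. intros b Hb. symmetry. apply Rf_anomaly, Hb. }
auto_derive; [repeat split; [eexists; exact Dp | apply ex_derive_anomaly_a, ha | eexists; exact Dk]|].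
rewrite (is_derive_unique (fun x : R => kappa m x l) a _ Dk), (is_derive_unique (fun x : R => pp m x l) a _ Dp).
field. lra.
Qed.

Lemma is_derive_Vf_a th a : 0 < a ->
  is_derive (fun b => Vf m l th b) a
    (sinh (anomaly th a) / (cosh (anomaly th a) - kappa m a l)
     + a * (cosh (anomaly th a) * Derive (fun b => anomaly th b) a * (cosh (anomaly th a) - kappa m a l)
            - sinh (anomaly th a) * (sinh (anomaly th a) * Derive (fun b => anomaly th b) a
                                     + kappa m a l * (1 - kappa m a l ^ 2) / a))
       / (cosh (anomaly th a) - kappa m a l) ^ 2).
Proof.
intro ha. destruct (kappa_bounds a ha). pose proof (cosh_ge_1 (anomaly th a)).
pose proof (is_derive_kappa a ha) as Dk.
apply (is_derive_ext_loc (fun b => b * sinh (anomaly th b) / (cosh (anomaly th b) - kappa m b l))).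
{ generalize (open_1d_pos a ha). apply filter_imp. intros b Hb. symmetry. apply Vf_anomaly, Hb. }
auto_derive.
{ assert (Ds := ex_derive_anomaly_a th a ha). repeat split; [exact Ds | exact Ds | eexists; exact Dk | lra]. }
rewrite (is_derive_unique (fun x : R => kappa m x l) a _ Dk).
field. lra.
Qed.


Lemma jacobian_RV th a : 0 < a ->
  Derive (fun t => Rf m l t a) th * Derive (fun b => Vf m l th b) a
  - Derive (fun b => Rf m l th b) a * Derive (fun t => Vf m l t a) th = 1.
Proof.
intro ha. destruct (kappa_bounds a ha). pose proof (pp_pos a ha). pose proof (cosh_ge_1 (anomaly th a)).
rewrite (is_derive_unique (fun t : R => Rf m l t a) th _ (is_derive_Rf_th th a ha)),
  (is_derive_unique (fun b : R => Vf m l th b) a _ (is_derive_Vf_a th a ha)),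
  (is_derive_unique (fun b : R => Rf m l th b) a _ (is_derive_Rf_a th a ha)),
  (is_derive_unique (fun t : R => Vf m l t a) th _ (is_derive_Vf_th th a ha)).
set (sa := Derive (fun b => anomaly th b) a).
set (s := anomaly th a) in *. set (k := kappa m a l) in *. set (p := pp m a l) in *.
clearbody sa s k p.
(* As in [is_derive_Vf_th], the defect is a multiple of [cosh s ^ 2 - sinh s ^ 2 - 1]. *)
transitivity (1 + (sinh s ^ 2 + 1 - cosh s ^ 2) * ((cosh s - k) - k * (1 - k ^ 2) - a * sinh s * sa)
                  / (cosh s - k) ^ 3).
- field. repeat split; lra.
- rewrite cosh_sqr. field. lra.
Qed.

Lemma curve_solves_ode th a t : 0 < a ->
  Dl m l (Rf m l (th + t * a) a) (Vf m l (th + t * a) a) /\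
  is_derive (fun s => Rf m l (th + s * a) a) t (Vf m l (th + t * a) a) /\
  is_derive (fun s => Vf m l (th + s * a) a) t
    (l / Rf m l (th + t * a) a ^ 3 - m / 2 * / Rf m l (th + t * a) a ^ 2).
Proof.
intro ha. split; [apply Dl_RV, ha|].
destruct (kappa_bounds a ha). pose proof (pp_pos a ha). pose proof (cosh_ge_1 (anomaly (th + t * a) a)).
split.
- replace (Vf m l (th + t * a) a)
    with (a * (sinh (anomaly (th + t * a) a) / (cosh (anomaly (th + t * a) a) - kappa m a l)))
    by (rewrite Vf_anomaly by exact ha; field; lra).
  apply (is_derive_affine_comp (fun x => Rf m l x a)), is_derive_Rf_th, ha.
- replace (l / Rf m l (th + t * a) a ^ 3 - m / 2 * / Rf m l (th + t * a) a ^ 2)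
    with (a * (a * (1 - kappa m a l * cosh (anomaly (th + t * a) a))
               / (pp m a l * (cosh (anomaly (th + t * a) a) - kappa m a l) ^ 3))).
  + apply (is_derive_affine_comp (fun x => Vf m l x a)), is_derive_Vf_th, ha.
  + destruct (orbit_relations a ha) as [Hm Hl]. rewrite Rf_anomaly by exact ha.
    set (s := anomaly (th + t * a) a) in *. set (k := kappa m a l) in *. set (p := pp m a l) in *.
    clearbody s k p. rewrite Hm, Hl. field. lra.
Qed.

Lemma is_derive_energy_along r v t : r t <> 0 ->
  is_derive r t (v t) -> is_derive v t (l / r t ^ 3 - m / 2 * / r t ^ 2) ->
  is_derive (fun s => v s ^ 2 - m / r s + l / r s ^ 2) t 0.
Proof.
intros hr Dr Dv. auto_derive.
- repeat split; try (eexists; eassumption); try exact hr.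
  rewrite Rmult_1_r. apply Rmult_integral_contrapositive_currified; exact hr.
- rewrite (is_derive_unique (fun x : R => v x) t _ Dv), (is_derive_unique (fun x : R => r x) t _ Dr).
  field. exact hr.
Qed.

Lemma is_derive_angle_along a r v t : 0 < a -> 0 < r t -> a ^ 2 = v t ^ 2 - m / r t + l / r t ^ 2 ->
  is_derive r t (v t) -> is_derive v t (l / r t ^ 3 - m / 2 * / r t ^ 2) ->
  is_derive (fun s => angle_at a (r s) (v s)) t a.
Proof.
intros ha hr HA Dr Dv. destruct (kappa_bounds a ha). pose proof (pp_pos a ha).
pose proof (cosh_arcsinh_sinh_anomaly_at a (r t) (v t) ha hr HA) as Hc.
rewrite cosh_arcsinh in Hc. unfold sinh_anomaly_at in Hc.
apply (is_derive_ext (fun s => pp m a l * (v s * (r s / (a * pp m a l))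
                        - kappa m a l * arcsinh (v s * (r s / (a * pp m a l)))))).
{ intro s. unfold angle_at, sinh_anomaly_at, kepler. rewrite sinh_arcsinh. reflexivity. }
pose proof (is_derive_arcsinh (v t * (r t / (a * pp m a l)))) as Da.
auto_derive.
- repeat split; try (eexists; eassumption); apply Rgt_not_eq, Rmult_lt_0_compat; lra.
- replace (Derive (fun x => arcsinh x) (v t * (r t * / (a * pp m a l))))
    with (/ (r t / pp m a l + kappa m a l)) by (rewrite <- Hc; symmetry; apply is_derive_unique, Da).
  rewrite (is_derive_unique (fun x : R => v x) t _ Dv), (is_derive_unique (fun x : R => r x) t _ Dr).
  destruct (orbit_relations a ha) as [Hm Hl].
  set (k := kappa m a l) in *. set (p := pp m a l) in *. clearbody k p.
  (* Up to the energy relation [HA], the right-hand side is [a]. *)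
  transitivity (a + (v t ^ 2 - (a ^ 2 + m / r t - l / r t ^ 2)) * (r t / (a * (r t + k * p)))).
  + rewrite Hm. field. repeat split; nra.
  + replace (v t ^ 2 - (a ^ 2 + m / r t - l / r t ^ 2)) with 0 by lra. ring.
Qed.

Lemma solution_is_curve (lo hi : Rbar) (r v : R -> R) : Rbar_lt lo hi ->
  (forall t : R, Rbar_lt lo t -> Rbar_lt t hi ->
     Dl m l (r t) (v t) /\ is_derive r t (v t) /\ is_derive v t (l / r t ^ 3 - m / 2 * / r t ^ 2)) ->
  exists th a, 0 < a /\ forall t : R, Rbar_lt lo t -> Rbar_lt t hi ->
    r t = Rf m l (th + t * a) a /\ v t = Vf m l (th + t * a) a.
Proof.
intros Hlh Hsol. destruct (Rbar_interval_nonempty lo hi Hlh) as [t0 [Hlo0 Hhi0]].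
set (a := Af m l (r t0) (v t0)).
assert (ha : 0 < a) by (apply Af_pos, Hsol; assumption).
assert (HA : forall t : R, Rbar_lt lo t -> Rbar_lt t hi -> Af m l (r t) (v t) = a).
{ intros t Hlo Hhi. unfold a, Af. f_equal.
  apply (is_derive_0_Rbar_interval_const (fun s => v s ^ 2 - m / r s + l / r s ^ 2) lo hi t0 t);
    try assumption.
  intros s Hlo' Hhi'. destruct (Hsol s Hlo' Hhi') as [[hr _] [Dr Dv]].
  apply is_derive_energy_along; [apply Rgt_not_eq, hr | assumption | assumption]. }
set (th := angle_at a (r t0) (v t0) - t0 * a).
assert (Hth : forall t : R, Rbar_lt lo t -> Rbar_lt t hi -> Thf m l (r t) (v t) = th + t * a).
{ intros t Hlo Hhi. destruct (Hsol t Hlo Hhi) as [HD _].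
  rewrite Thf_angle_at, HA by assumption. unfold th.
  assert (E : angle_at a (r t) (v t) - t * a = angle_at a (r t0) (v t0) - t0 * a); [|lra].
  apply (is_derive_0_Rbar_interval_const (fun s => angle_at a (r s) (v s) - s * a) lo hi t0 t);
    try assumption.
  intros s Hlo' Hhi'. destruct (Hsol s Hlo' Hhi') as [HDs [Dr Dv]].
  replace 0 with (a - 1 * a) by ring.
  apply (is_derive_minus (fun s => angle_at a (r s) (v s)) (fun s => s * a)).
  - apply is_derive_angle_along; try assumption; [apply HDs|].
    rewrite <- (HA s Hlo' Hhi'). apply Af_sqr, HDs.
  - auto_derive; [exact I | ring]. }
exists th, a. split; [exact ha|]. intros t Hlo Hhi. destruct (Hsol t Hlo Hhi) as [HD _].
destruct (right_inverse (r t) (v t) HD) as [Er Ev]. rewrite Hth, HA in Er, Ev by assumption.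
split; symmetry; assumption.
Qed.

End Orbits.

Theorem proposition2p6 (m : R) (hm : 0 < m) (l : R) (hl : 0 < l) :
  (* (R,V) maps R x (0,oo) into D_l *)
  (forall th a, 0 < a -> Dl m l (Rf m l th a) (Vf m l th a)) /\
  (* (Theta, A) maps D_l into R x (0,oo) *)
  (forall r v, Dl m l r v -> 0 < Af m l r v) /\
  (* (Theta, A) is a left inverse of (R,V) *)
  (forall th a, 0 < a ->
     Thf m l (Rf m l th a) (Vf m l th a) = th /\
     Af m l (Rf m l th a) (Vf m l th a) = a) /\
  (* (Theta, A) is a right inverse of (R,V) *)
  (forall r v, Dl m l r v ->
     Rf m l (Thf m l r v) (Af m l r v) = r /\
     Vf m l (Thf m l r v) (Af m l r v) = v) /\
  (* both maps are C^infinity *)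
  smooth Hplane (Rf m l) /\ smooth Hplane (Vf m l) /\
  smooth (Dl m l) (Thf m l) /\ smooth (Dl m l) (Af m l) /\
  (* canonical: dr /\ dv = dtheta /\ da, i.e. the Jacobian determinant is 1 *)
  (forall th a, 0 < a ->
     Derive (fun t => Rf m l t a) th * Derive (fun s => Vf m l th s) a
     - Derive (fun s => Rf m l th s) a * Derive (fun t => Vf m l t a) th = 1) /\
  (* every solution of the ODE on an open interval staying in D_l is such a curve *)
  (forall (lo hi : Rbar) (r v : R -> R),
     Rbar_lt lo hi ->
     (forall t : R, Rbar_lt lo t -> Rbar_lt t hi ->
        Dl m l (r t) (v t) /\
        is_derive r t (v t) /\
        is_derive v t (l / (r t) ^ 3 - m / 2 * / (r t) ^ 2)) ->
     exists th a, 0 < a /\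
       forall t : R, Rbar_lt lo t -> Rbar_lt t hi ->
         r t = Rf m l (th + t * a) a /\ v t = Vf m l (th + t * a) a) /\
  (* and every such curve is a (global) solution staying in D_l *)
  (forall th a, 0 < a ->
     forall t,
       Dl m l (Rf m l (th + t * a) a) (Vf m l (th + t * a) a) /\
       is_derive (fun s => Rf m l (th + s * a) a) t (Vf m l (th + t * a) a) /\
       is_derive (fun s => Vf m l (th + s * a) a) t
         (l / (Rf m l (th + t * a) a) ^ 3 - m / 2 * / (Rf m l (th + t * a) a) ^ 2)).
Proof.
split; [exact (Dl_RV m l hm hl)|].
split; [exact (Af_pos m l)|].
split; [exact (left_inverse m l hm hl)|].
split; [exact (right_inverse m l hm hl)|].
split; [apply Cinf_smooth, (Cinf_Rf m l hm hl)|].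
split; [apply Cinf_smooth, (Cinf_Vf m l hm hl)|].
split; [apply Cinf_smooth, (Cinf_Thf m l hm hl)|].
split; [apply Cinf_smooth, (Cinf_Af m l)|].
split; [exact (jacobian_RV m l hm hl)|].
split; [exact (solution_is_curve m l hm hl)|].
intros th a ha t. exact (curve_solves_ode m l hm hl th a t ha).
Qed.
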